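(* Let $0\le t\le 1$ and $u>0$, and let $D=\mathrm{DASEP}(3,3,2)$ with stationary distribution $\mathrm{Pd}$. Suppose that for every partition $\lambda$ with $\lambda_1\le 3$ and exactly $2$ nonzero parts, and all $\mu,\nu\in S_3(\lambda)$, we have $$\frac{\Pr_\lambda(\mu)}{\Pr_\lambda(\nu)}=\frac{\mathrm{Pd}(\mu)}{\mathrm{Pd}(\nu)}.$$ Then $t=1$.
   Context: For a partition $\lambda=(\lambda_1\ge\dots\ge\lambda_n\ge 0)$ of nonnegative integers, $S_n(\lambda)$ denotes the set of all distinct rearrangements of $\lambda$, viewed as words $(\mu_1,\dots,\mu_n)$ whose positions $1,\dots,n$ lie on a circle. Fix $0\le t\le 1$. ASEP($\lambda$) is the Markov chain on $S_n(\lambda)$ with transition probabilities $P_{\mu,\nu}$ defined as follows. If $\mu$ has entries $i\ne j$ in adjacent positions $k,k+1$ ($1\le k\le n-1$) and $\nu$ is obtained from $\mu$ by swapping them, then $P_{\mu,\nu}=t/n$ if $i>j$ and $P_{\mu,\nu}=1/n$ if $i<j$. If $\mu=(i,\mu_2,\dots,\mu_{n-1},j)$ with $i\ne j$ and $\nu=(j,\mu_2,\dots,\mu_{n-1},i)$, then $P_{\mu,\nu}=t/n$ if $j>i$ and $P_{\mu,\nu}=1/n$ if $i>j$. All other off-diagonal transition probabilities are $0$, and the diagonal entries are chosen so that each row sums to $1$. $\Pr_\lambda$ denotes the stationary distribution of ASEP($\lambda$). Fix also $u>0$. For positive integers $n,p,q$ with $n>q$, DASEP$(n,p,q)$ is the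 Markov chain on the set of words in $\{0,1,\dots,p\}^n$ with exactly $q$ nonzero entries (equivalently, the union of $S_n(\lambda)$ over partitions $\lambda$ with $\lambda_1\le p$ and exactly $q$ nonzero parts). Its transition probabilities are as follows. The two swap rules of ASEP apply, with probabilities $t/(3n)$ and $1/(3n)$ in place of $t/n$ and $1/n$. Replacing a single entry $i$ with $1\le i\le p-1$ by $i+1$ has probability $u/(3n)$. Replacing a single entry $i+1$ with $i\ge 1$ by $i$ has probability $1/(3n)$. All other off-diagonal transition probabilities are $0$, and the diagonal entries make each row sum to $1$. $\mathrm{Pd}$ denotes the stationary distribution of the DASEP. *)

From HB Require Import structures.
From mathcomp Require Import all_boot all_order all_algebra.
Set Implicit Arguments. Unset Strict Implicit. Unset Printing Implicit Defensive.
Import Order.TTheory GRing.Theory Num.Theory.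
Local Open Scope ring_scope.

(* Words of length n with entries in {0,...,p}; position i+1 of the paper is
   index i : 'I_n here. *)
Definition word (n p : nat) := {ffun 'I_n -> 'I_p.+1}.

Section Chains.
Variables (R : realFieldType) (n p : nat).
Implicit Types (mu nu lam : word n p).

Definition swapped mu nu (a b : 'I_n) : bool :=
  [&& nu a == mu b, nu b == mu a &
      [forall j, ((j != a) && (j != b)) ==> (nu j == mu j)]].

Definition replaced mu nu (a : 'I_n) (v : nat) : bool :=
  ((nu a : nat) == v) && [forall j, (j != a) ==> (nu j == mu j)].

Definition swap_off (c t : R) mu nu : R :=
  (\sum_(a : 'I_n) \sum_(b : 'I_n | val b == (val a).+1)
     (if (mu a != mu b) && swapped mu nu a b then
        (if (mu b < mu a)%N then t * c else c) else 0))
  + (\sum_(a : 'I_n | val a == 0%N) \sum_(b : 'I_n | val b == n.-1)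
     (if (mu a != mu b) && swapped mu nu a b then
        (if (mu a < mu b)%N then t * c else c) else 0)).

Definition asep_off (t : R) mu nu : R := swap_off (n%:R)^-1 t mu nu.

Definition dasep_off (t u : R) mu nu : R :=
  swap_off (3 * n%:R)^-1 t mu nu
  + \sum_(a : 'I_n)
      ((if (1 <= mu a <= p.-1)%N && replaced mu nu a (mu a).+1
        then u / (3 * n%:R) else 0)
     + (if (2 <= mu a)%N && replaced mu nu a (mu a).-1
        then (3 * n%:R)^-1 else 0)).

Definition trans (S : pred (word n p)) (off : word n p -> word n p -> R) mu nu : R :=
  if mu == nu then 1 - \sum_(z in S | z != mu) off mu z else off mu nu.

Definition is_stationary (S : pred (word n p)) (P : word n p -> word n p -> R)
  (pi : word n p -> R) : Prop :=
  [/\ forall x, x \in S -> 0 <= pi x,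
      \sum_(x in S) pi x = 1 &
      forall y, y \in S -> \sum_(x in S) pi x * P x y = pi y].

(* lam is a partition lam_1 >= ... >= lam_n >= 0 (with lam_1 <= p by typing) *)
Definition is_partition lam : bool :=
  sorted (fun x y : nat => (y <= x)%N) [seq val (lam i) | i <- enum 'I_n].

Definition nonzero_count mu : nat := #|[pred i : 'I_n | (mu i != 0 :> nat)]|.

Definition S_of lam : pred (word n p) :=
  [pred mu | perm_eq (fgraph mu) (fgraph lam)].

Definition dasep_states (q : nat) : pred (word n p) :=
  [pred mu | nonzero_count mu == q].

Definition asep_P (t : R) lam := trans (S_of lam) (asep_off t).
Definition dasep_P (q : nat) (t u : R) := trans (dasep_states q) (dasep_off t u).

End Chains.

From HB Require Import structures.
From mathcomp Require Import all_boot all_order all_algebra ring lra zify.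
Import Order.TTheory GRing.Theory Num.Theory.
Set Implicit Arguments. Unset Strict Implicit. Unset Printing Implicit Defensive.
Local Open Scope ring_scope.

(* For a partition with three distinct parts l < m < h, ASEP on three sites
   has an explicit stationary law: the three rotations of (l, m, h) share one
   probability, the three rotations of (h, m, l) share another, and the two
   are in ratio pi(h,m,l) : pi(l,m,h) = (2 + t) : (1 + 2 t).  The ratio hypothesis transports these
   relations to the DASEP(3,3,2) law Pd on the classes of (2,1,0), (3,1,0) and
   (3,2,0).  Substituted into the DASEP balance equations at the six states
   (0,a,b) with {a,b} a 2-subset of {1,2,3}, they leave a linear system in
   which the differences Pd(b,a,0) - Pd(0,a,b) satisfy a recursion forcing
   (2 + 4u + 4u^2 + 2u^3) (Pd(2,1,0) - Pd(0,1,2)) = 0.  Hence the two classes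
   of (2,1,0) have equal (nonzero) weight, i.e. 1 + 2 t = 2 + t. *)

Local Notation i0 := (@Ordinal 3 0 isT).
Local Notation i1 := (@Ordinal 3 1 isT).
Local Notation i2 := (@Ordinal 3 2 isT).

Section Words3.
Variable p : nat.

Definition word3 (a b c : 'I_p.+1) : word 3 p := [ffun i : 'I_3 => nth a [:: a; b; c] i].

Lemma word3E a b c i : word3 a b c i = nth a [:: a; b; c] i.
Proof. exact: ffunE. Qed.

Lemma enum_ord3 : enum 'I_3 = [:: i0; i1; i2].
Proof. by apply: (inj_map val_inj); rewrite val_enum_ord. Qed.

Lemma big_ord3 (T : Type) (idx : T) (op : Monoid.com_law idx) (F : 'I_3 -> T) :
  \big[op/idx]_(i : 'I_3) F i = op (F i0) (op (F i1) (F i2)).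
Proof. by rewrite -big_enum enum_ord3 !big_cons big_nil Monoid.mulm1. Qed.

Lemma forall_ord3 (P : pred 'I_3) : [forall i, P i] = [&& P i0, P i1 & P i2].
Proof.
apply/forallP/and3P => [H|[H0 H1 H2] [[|[|[|//]]] i]]; first by split; apply: H.
- by rewrite (_ : Ordinal i = i0) //; apply: val_inj.
- by rewrite (_ : Ordinal i = i1) //; apply: val_inj.
- by rewrite (_ : Ordinal i = i2) //; apply: val_inj.
Qed.

Lemma word3_eta (x : word 3 p) : x = word3 (x i0) (x i1) (x i2).
Proof. by apply/ffunP => -[[|[|[|//]]] i]; rewrite word3E /=; congr (x _); apply: val_inj. Qed.

Lemma word3_eq a b c a' b' c' :
  (word3 a b c == word3 a' b' c') = [&& a == a', b == b' & c == c'].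
Proof.
apply/eqP/and3P => [E|[/eqP-> /eqP-> /eqP->]] //.
have E_ i : word3 a b c i = word3 a' b' c' i by rewrite E.
by move: (E_ i0) (E_ i1) (E_ i2); rewrite !word3E /= => -> -> ->.
Qed.

Lemma word3_inj :
  injective (fun x : 'I_p.+1 * 'I_p.+1 * 'I_p.+1 => word3 x.1.1 x.1.2 x.2).
Proof.
move=> [[a b] c] [[a' b'] c'] /= /eqP.
by rewrite word3_eq => /and3P[/eqP-> /eqP-> /eqP->].
Qed.

Lemma fgraph_word3 a b c : fgraph (word3 a b c) = [:: a; b; c] :> seq _.
Proof. by rewrite -codom_ffun codomE enum_ord3 /= !word3E. Qed.

Lemma nonzero_count_word3 a b c :
  nonzero_count (word3 a b c) = ((a != 0 :> nat) + (b != 0 :> nat) + (c != 0 :> nat))%N.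
Proof.
by rewrite /nonzero_count -sum1_card big_mkcond /= big_ord3 /= !inE !word3E /= addnA.
Qed.

Lemma word3_partition (a b c : 'I_p.+1) : (c <= b <= a)%N -> is_partition (word3 a b c).
Proof. by move=> /andP[cb ba]; rewrite /is_partition enum_ord3 /= !word3E /= ba cb. Qed.

End Words3.
Arguments word3 : simpl never.

Lemma big_enum_uniq (V : nmodType) (T : finType) (S : pred T) (s : seq T) (F : T -> V) :
  uniq s -> S =i s -> \sum_(x in S) F x = \sum_(x <- s) F x.
Proof. by move=> us eqSs; rewrite big_uniq //; apply: eq_bigl. Qed.

Section Stationary.
Variables (R : realFieldType) (n p : nat).

Lemma stationary_balance (S : pred (word n p)) (off : word n p -> word n p -> R)
    (pi : word n p -> R) (y : word n p) :
  is_stationary S (trans S off) pi -> y \in S ->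
  \sum_(x in S) pi x * off x y = pi y * \sum_(z in S) off y z.
Proof.
case=> _ _ /(_ y) stat Sy; move: (stat Sy); rewrite !(bigD1 y Sy) /= {1}/trans eqxx.
rewrite [X in _ + X](eq_bigr (fun x => pi x * off x y)) => [|x /andP[_ /negPf xy]].
  by rewrite mulrBr mulr1 mulrDr => balance; lra.
by rewrite /trans xy.
Qed.
End Stationary.

Section Rates.
Variables (R : realFieldType) (p : nat).

Definition swap_rate (c t : R) (a0 a1 a2 b0 b1 b2 : 'I_p.+1) : R :=
    (if [&& a0 != a1, b0 == a1, b1 == a0 & b2 == a2]
     then (if (a1 < a0)%N then t * c else c) else 0)
  + (if [&& a1 != a2, b0 == a0, b1 == a2 & b2 == a1]
     then (if (a2 < a1)%N then t * c else c) else 0)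
  + (if [&& a0 != a2, b0 == a2, b1 == a1 & b2 == a0]
     then (if (a0 < a2)%N then t * c else c) else 0).

Lemma swap_off_word3 (c t : R) (a0 a1 a2 b0 b1 b2 : 'I_p.+1) :
  swap_off c t (word3 a0 a1 a2) (word3 b0 b1 b2) = swap_rate c t a0 a1 a2 b0 b1 b2.
Proof.
rewrite /swap_off /swapped.
repeat progress (rewrite ?big_mkcond ?big_ord3 /= ?forall_ord3).
rewrite !add0r !addr0 !word3E /= !andbT.
by rewrite (andbA (b1 == a2)) (andbC _ (b0 == a0)) (andbC (b2 == a0)).
Qed.

Definition dasep3_level_rate (u : R) (a b : nat) : R :=
  (if (1 <= a <= p.-1)%N && (b == a.+1) then u / (3 * 3%:R) else 0)
  + (if (2 <= a)%N && (b == a.-1) then (3 * 3%:R)^-1 else 0).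

Definition dasep3_rate (t u : R) (a0 a1 a2 b0 b1 b2 : 'I_p.+1) : R :=
    swap_rate (3 * 3%:R)^-1 t a0 a1 a2 b0 b1 b2
  + ((if (b1 == a1) && (b2 == a2) then dasep3_level_rate u a0 b0 else 0)
  + ((if (b0 == a0) && (b2 == a2) then dasep3_level_rate u a1 b1 else 0)
  + (if (b0 == a0) && (b1 == a1) then dasep3_level_rate u a2 b2 else 0))).

Lemma dasep_off_word3 (t u : R) (a0 a1 a2 b0 b1 b2 : 'I_p.+1) :
  dasep_off t u (word3 a0 a1 a2) (word3 b0 b1 b2) = dasep3_rate t u a0 a1 a2 b0 b1 b2.
Proof.
rewrite /dasep_off swap_off_word3 /dasep3_rate /dasep3_level_rate big_ord3 /replaced.
rewrite !forall_ord3 !word3E /= !andbT; congr (_ + _).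
by case: (b0 == a0); case: (b1 == a1); case: (b2 == a2); rewrite /= ?andbT ?andbF ?addr0.
Qed.
End Rates.

Section ThreeSpecies.
Variable p : nat.
Implicit Types (l m h : 'I_p.+1).

Definition asep3_states l m h : seq (word 3 p) :=
  [:: word3 l m h; word3 m h l; word3 h l m; word3 h m l; word3 m l h; word3 l h m].

Lemma uniq_of_lt3 l m h : (l < m < h)%N -> uniq [:: h; m; l].
Proof.
case/andP=> lm mh; rewrite /= !inE negb_or andbT.
by rewrite -!val_eqE /= !neq_ltn mh (ltn_trans lm mh) lm !orbT.
Qed.

Lemma distinct3 l m h : uniq [:: h; m; l] ->
  [/\ (h == m) = false, (h == l) = false & (m == l) = false]
  /\ [/\ (m == h) = false, (l == h) = false & (l == m) = false].
Proof.
rewrite /= !inE negb_or andbT => /andP[/andP[hm hl] ml].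
by rewrite ![_ == h]eq_sym ![l == _]eq_sym !(negPf hm, negPf hl, negPf ml).
Qed.

Lemma S_of_word3 l m h : uniq [:: h; m; l] -> S_of (word3 h m l) =i asep3_states l m h.
Proof.
move=> /distinct3[[hm hl ml] [mh lh lm]] x; rewrite [x]word3_eta inE fgraph_word3.
rewrite !inE !word3_eq fgraph_word3; move: (x i0) (x i1) (x i2) => a b c.
apply/idP/idP => [pabc|].
  have: uniq [:: a; b; c] by rewrite (perm_uniq pabc) /= !inE hm hl ml.
  have: [/\ a \in [:: h; m; l], b \in [:: h; m; l] & c \in [:: h; m; l]].
    by rewrite -!(perm_mem pabc) !inE !eqxx !orbT.
  rewrite !mem_seq3 => -[/or3P[]/eqP-> /or3P[]/eqP-> /or3P[]/eqP->];
    by rewrite /= !inE ?(hm, mh, hl, lh, ml, lm, eqxx).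
by do ![case/orP|case/and3P=> /eqP-> /eqP-> /eqP->]; apply/permP => P /=; lia.
Qed.

Lemma uniq_asep3_states l m h : uniq [:: h; m; l] -> uniq (asep3_states l m h).
Proof.
move=> /distinct3[[hm hl ml] [mh lh lm]].
by rewrite /= !inE !word3_eq ?(hm, mh, hl, lh, ml, lm, eqxx).
Qed.
End ThreeSpecies.

Section ThreeSpeciesAlgebra.
Variable R : realFieldType.

Lemma asep3_difference_eq0 (t a d : R) : 0 <= t ->
  (1 - t) * d = (2 + t) * a -> (t - 1) * a = (1 + 2 * t) * d -> a = 0 /\ d = 0.
Proof.
move=> t0 Ed Ea.
have key : (3 + 3 * t + 3 * t ^+ 2) * a = 0.
  transitivity ((1 + 2 * t) * ((2 + t) * a) - (1 - t) * ((t - 1) * a)); first by ring.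
  by rewrite -Ed Ea; ring.
have a0 : a = 0.
  apply/eqP; move/eqP: key; rewrite mulf_eq0 => /orP[/eqP|//].
  by have := sqr_ge0 t; rewrite expr2; lra.
split=> //; apply/eqP; move/eqP: Ea; rewrite a0 mulr0 eq_sym mulf_eq0 => /orP[/eqP|//].
lra.
Qed.

Lemma asep3_balance_solution (t A1 A2 A3 B1 B2 B3 : R) : 0 <= t ->
  B1 + t * B2 + t * B3 = (2 + t) * A1 ->
  t * B1 + B2 + t * B3 = (2 + t) * A2 ->
  t * B1 + t * B2 + B3 = (2 + t) * A3 ->
  t * A1 + A2 + A3 = (1 + 2 * t) * B1 ->
  A1 + t * A2 + A3 = (1 + 2 * t) * B2 ->
  A1 + A2 + t * A3 = (1 + 2 * t) * B3 ->
  A1 + A2 + A3 + B1 + B2 + B3 = 1 ->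
  [/\ A2 = A1, A3 = A1, B2 = B1, B3 = B1 & (1 + 2 * t) * B1 = (2 + t) * A1] /\ A1 != 0.
Proof.
move=> t0 E1 E2 E3 E4 E5 E6 sum1.
have [a12 d12] := @asep3_difference_eq0 t (A1 - A2) (B1 - B2) t0 ltac:(lra) ltac:(lra).
have [a13 d13] := @asep3_difference_eq0 t (A1 - A3) (B1 - B3) t0 ltac:(lra) ltac:(lra).
have sol : (1 + 2 * t) * B1 = (2 + t) * A1 by lra.
split; first by split=> //; lra.
apply/eqP=> A10; move: sol; rewrite A10 mulr0 => /eqP; rewrite mulf_eq0 => /orP[/eqP|/eqP B10].
  lra.
lra.
Qed.
End ThreeSpeciesAlgebra.

Lemma proportional_of_ratio (F : fieldType) (x x' y y' : F) :
  y != 0 -> y / y = y' / y' -> x / y = x' / y' -> x' = y' / y * x.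
Proof.
move=> y0; rewrite divff //; have [->|y'0 _] := eqVneq y' 0.
  by rewrite mul0r => /eqP; rewrite oner_eq0.
by move=> /(congr1 ( *%R^~ y')); rewrite divfK // => <-; ring.
Qed.

Section ThreeSpeciesLaw.
Variables (R : realFieldType) (p : nat).
Implicit Types (l m h : 'I_p.+1) (pi : word 3 p -> R).

Definition asep3_law (t : R) pi l m h : Prop :=
  [/\ pi (word3 m h l) = pi (word3 l m h), pi (word3 h l m) = pi (word3 l m h),
      pi (word3 m l h) = pi (word3 h m l), pi (word3 l h m) = pi (word3 h m l)
    & (1 + 2 * t) * pi (word3 h m l) = (2 + t) * pi (word3 l m h)].

Lemma asep3_stationary (t : R) l m h pi :
  0 <= t -> (l < m < h)%N ->
  is_stationary (S_of (word3 h m l)) (asep_P t (word3 h m l)) pi ->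
  asep3_law t pi l m h /\ pi (word3 l m h) != 0.
Proof.
move=> t0 lmh stat; have uS := uniq_of_lt3 lmh.
have [[hm hl ml] [mh lh lm]] := distinct3 uS.
case/andP: lmh => lt_lm lt_mh; have lt_lh := ltn_trans lt_lm lt_mh.
have [[gt_lm gt_mh] gt_lh] := (leq_gtF (ltnW lt_lm), leq_gtF (ltnW lt_mh), leq_gtF (ltnW lt_lh)).
have enumS := big_enum_uniq _ (uniq_asep3_states uS) (S_of_word3 uS).
have sum1 : \sum_(x <- asep3_states l m h) pi x = 1 by case: stat => _ <- _; rewrite enumS.
have bal y : y \in asep3_states l m h ->
    \sum_(x <- asep3_states l m h) pi x * asep_off t x y =
    pi y * \sum_(z <- asep3_states l m h) asep_off t y z.
  by move=> Ly; rewrite -!enumS (stationary_balance stat) ?(S_of_word3 uS).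
move: (bal (word3 l m h)) (bal (word3 m h l)) (bal (word3 h l m))
  (bal (word3 h m l)) (bal (word3 m l h)) (bal (word3 l h m)).
rewrite !inE !eqxx ?orbT /asep3_states unlock /= /asep_off !swap_off_word3 /swap_rate.
rewrite ?(hm, hl, ml, mh, lh, lm, gt_lm, gt_mh, gt_lh, lt_lm, lt_mh, lt_lh, eqxx) /=.
move=> /(_ isT) E1 /(_ isT) E2 /(_ isT) E3 /(_ isT) E4 /(_ isT) E5 /(_ isT) E6.
rewrite /asep3_states unlock /= addr0 !addrA in sum1.
by apply: asep3_balance_solution => //; lra.
Qed.

Lemma asep3_law_scale (t k : R) pi pi' l m h :
  {in asep3_states l m h, forall x, pi' x = k * pi x} ->
  asep3_law t pi l m h -> asep3_law t pi' l m h.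
Proof.
move=> scale [E1 E2 E3 E4 E5]; rewrite /asep3_law !scale ?inE ?eqxx ?orbT //.
by rewrite E1 E2 E3 E4 mulrCA E5 mulrCA.
Qed.

Lemma asep3_ratio_law (t : R) l m h pi pi' :
  0 <= t -> (l < m < h)%N ->
  is_stationary (S_of (word3 h m l)) (asep_P t (word3 h m l)) pi ->
  {in S_of (word3 h m l) &, forall mu nu, pi mu / pi nu = pi' mu / pi' nu} ->
  asep3_law t pi' l m h /\ pi' (word3 l m h) != 0.
Proof.
move=> t0 lmh stat ratio; have [law pi0] := asep3_stationary t0 lmh stat.
have uS := uniq_of_lt3 lmh.
have Slmh : word3 l m h \in S_of (word3 h m l) by rewrite (S_of_word3 uS) inE eqxx.
split.
  apply: (asep3_law_scale (k := pi' (word3 l m h) / pi (word3 l m h))) law => x.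
  rewrite -(S_of_word3 uS) => Sx.
  exact: proportional_of_ratio pi0 (ratio _ _ Slmh Slmh) (ratio _ _ Sx Slmh).
apply/eqP=> pi'0; move: (ratio _ _ Slmh Slmh).
by rewrite pi'0 mul0r divff // => /eqP; rewrite oner_eq0.
Qed.
End ThreeSpeciesLaw.

Local Notation v0 := (@Ordinal 4 0 isT).
Local Notation v1 := (@Ordinal 4 1 isT).
Local Notation v2 := (@Ordinal 4 2 isT).
Local Notation v3 := (@Ordinal 4 3 isT).

Definition dasep332_triples : seq ('I_4 * 'I_4 * 'I_4) :=
  let nz := [:: v1; v2; v3] in
  [seq (v0, a, b) | a <- nz, b <- nz] ++ [seq (a, v0, b) | a <- nz, b <- nz]
  ++ [seq (a, b, v0) | a <- nz, b <- nz].

Definition dasep332_states : seq (word 3 3) :=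
  [seq word3 x.1.1 x.1.2 x.2 | x <- dasep332_triples].

Lemma uniq_dasep332_states : uniq dasep332_states.
Proof. by rewrite (map_inj_uniq (@word3_inj 3)). Qed.

Lemma dasep332_statesE : @dasep_states 3 3 2 =i dasep332_states.
Proof.
move=> x; rewrite [x]word3_eta inE nonzero_count_word3.
rewrite (mem_map (@word3_inj 3) _ (x i0, x i1, x i2)).
by case: (x i0) (x i1) (x i2) => [[|[|[|[|//]]]] ?] [[|[|[|[|//]]]] ?] [[|[|[|[|//]]]] ?].
Qed.

Section Dasep332.
Variable R : realFieldType.

Lemma dasep332_balance_forces_t1 (t u a b c x1 x2 x3 y1 y2 y3 : R) :
  0 < u -> x1 != 0 ->
  (1 + 2 * t) * y1 = (2 + t) * x1 ->
  (1 + 2 * t) * y2 = (2 + t) * x2 ->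
  (1 + 2 * t) * y3 = (2 + t) * x3 ->
  u * a + x2 + t * y1 + b + t * y1 + y1 = (3 + t + 2 * u) * x1 ->
  u * a + x1 + b + y2 + x1 + t * x1 = (2 + 2 * t + 2 * u) * y1 ->
  u * x1 + x3 + t * y2 + t * y2 + y2 = (3 + t + u) * x2 ->
  x2 + u * y1 + y3 + x2 + t * x2 = (2 + 2 * t + u) * y2 ->
  u * x2 + u * b + t * y3 + c + t * y3 + y3 = (4 + t + u) * x3 ->
  u * b + x3 + u * y2 + c + x3 + t * x3 = (3 + 2 * t + u) * y3 ->
  t = 1.
Proof.
move=> u0 x10 R1 R2 R3 E1 E2 E3 E4 E5 E6.
have d2 : y2 - x2 = (1 + 2 * u) * (y1 - x1) by lra.
have d3 : y3 - x3 = (1 + u) * (y2 - x2) - u * (y1 - x1) by lra.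
have d4 : (2 + u) * (y3 - x3) = u * (y2 - x2) by lra.
have d1 : (2 + 4 * u + 4 * u ^+ 2 + 2 * u ^+ 3) * (y1 - x1) = 0.
  by move: d4; rewrite d3 d2; lra.
have y1x1 : y1 = x1.
  apply/eqP; rewrite -subr_eq0; move/eqP: d1; rewrite mulf_eq0 => /orP[/eqP|//].
  have u2 : 0 < u ^+ 2 by rewrite exprn_gt0.
  have u3 : 0 < u ^+ 3 by rewrite exprn_gt0.
  lra.
move/eqP: R1; rewrite y1x1 -subr_eq0 -mulrBl mulf_eq0 (negPf x10) orbF subr_eq0.
by move/eqP; lra.
Qed.

Lemma dasep332_law_forces_t1 (t u : R) (Pd : word 3 3 -> R) :
  0 < u ->
  is_stationary (@dasep_states 3 3 2) (@dasep_P R 3 3 2 t u) Pd ->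
  asep3_law t Pd v0 v1 v2 -> asep3_law t Pd v0 v1 v3 -> asep3_law t Pd v0 v2 v3 ->
  Pd (word3 v0 v1 v2) != 0 -> t = 1.
Proof.
move=> u0 stat [L1 L2 L3 L4 L5] [M1 M2 M3 M4 M5] [N1 N2 N3 N4 N5] Pd0.
have enumS := big_enum_uniq _ uniq_dasep332_states dasep332_statesE.
have bal (a b c : 'I_4) : ((a != 0 :> nat) + (b != 0 :> nat) + (c != 0 :> nat) == 2)%N ->
    \sum_(k <- dasep332_triples)
      Pd (word3 k.1.1 k.1.2 k.2) * dasep3_rate t u k.1.1 k.1.2 k.2 a b c =
    Pd (word3 a b c) * \sum_(k <- dasep332_triples) dasep3_rate t u a b c k.1.1 k.1.2 k.2.
  move=> nz; have := stationary_balance stat (y := word3 a b c).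
  rewrite inE nonzero_count_word3 nz !enumS !big_map => /(_ isT) bal.
  under eq_bigr do rewrite -dasep_off_word3.
  by under [in RHS]eq_bigr do rewrite -dasep_off_word3.
move: (bal v0 v1 v2 isT) (bal v0 v2 v1 isT) (bal v0 v1 v3 isT)
  (bal v0 v3 v1 isT) (bal v0 v2 v3 isT) (bal v0 v3 v2 isT).
rewrite /dasep332_triples unlock /dasep3_rate /swap_rate /dasep3_level_rate /=.
rewrite ?(L1, L2, L3, L4, M1, M2, M3, M4, N1, N2, N3, N4) => E1 E2 E3 E4 E5 E6.
apply: (dasep332_balance_forces_t1 (a := Pd (word3 v0 v1 v1)) (b := Pd (word3 v0 v2 v2))
  (c := Pd (word3 v0 v3 v3)) u0 Pd0 L5 M5 N5).
- by clear -E1; lra.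
- by clear -E2; lra.
- by clear -E3; lra.
- by clear -E4; lra.
- by clear -E5; lra.
- by clear -E6; lra.
Qed.
End Dasep332.

Theorem mainTheorem2 (R : realFieldType) (t u : R) :
  0 <= t -> t <= 1 -> 0 < u ->
  forall (Pr : word 3 3 -> word 3 3 -> R) (Pd : word 3 3 -> R),
    is_stationary (@dasep_states 3 3 2) (@dasep_P R 3 3 2 t u) Pd ->
    (forall lam : word 3 3, is_partition lam -> nonzero_count lam = 2%N ->
       is_stationary (S_of lam) (asep_P t lam) (Pr lam)) ->
    (forall lam : word 3 3, is_partition lam -> nonzero_count lam = 2%N ->
       forall mu nu, mu \in S_of lam -> nu \in S_of lam ->
         Pr lam mu / Pr lam nu = Pd mu / Pd nu) ->
    t = 1.
Proof.
move=> t0 _ u0 Pr Pd statD statA ratio.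
have law (m h : 'I_4) : (0 < m < h)%N -> asep3_law t Pd v0 m h /\ Pd (word3 v0 m h) != 0.
  case/andP=> m0 mh.
  have lam_part : is_partition (word3 h m v0) by apply: word3_partition; rewrite /= ltnW.
  have lam_nz : nonzero_count (word3 h m v0) = 2%N.
    by rewrite nonzero_count_word3 -!lt0n m0 (ltn_trans m0 mh).
  apply: asep3_ratio_law t0 _ (statA _ lam_part lam_nz) (ratio _ lam_part lam_nz).
  by rewrite m0 mh.
have [[L12 Pd0] [L13 _]] := (law v1 v2 isT, law v1 v3 isT); have [L23 _] := law v2 v3 isT.
exact: dasep332_law_forces_t1 u0 statD L12 L13 L23 Pd0.
Qed.
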